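(* Let $H$ be a Hilbert space and $U_{ik}\in B(H)$, $i,k=1,\dots,n$, operators satisfying relations (R1)–(R5). Then every $U_{ik}$ is normal: $U_{ik}U_{ik}^*=U_{ik}^*U_{ik}$ for all $i,k$.
   Context: $n\ge2$, $\theta\in M_n(\mathbb R)$ skew-symmetric, $\omega_{ij}=e^{2\pi i\theta_{ij}}$. Relations, for all $i,j,k,l\in\{1,\dots,n\}$: (R1) $U_{ik}U_{jl}+\omega_{ji}U_{jk}U_{il}=\omega_{kl}U_{il}U_{jk}+\omega_{ji}\omega_{kl}U_{jl}U_{ik}$; (R2) $\sum_iU_{ik}U_{il}^*=\delta_{kl}1$; (R3) $\sum_iU_{il}^*U_{ik}=\delta_{kl}1$; (R4) $U_{jk}U_{ik}^*=0$ for $i\neq j$; (R5) $U_{ik}^*U_{jk}=0$ for $i\neq j$. *)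

From HB Require Import structures.
From mathcomp Require Import all_boot all_order all_algebra.
From mathcomp Require Import reals trigo.
From mathcomp Require Import complex.
Set Implicit Arguments. Unset Strict Implicit. Unset Printing Implicit Defensive.
Import Order.TTheory GRing.Theory Num.Theory.
Local Open Scope ring_scope.

Section Hilbert.
Variable R : realType.
Local Notation C := (R[i]).
(* The complex scalar field is C = R[i], a numClosedFieldType; its order is
   the usual partial order (z >= 0 iff z is real and nonnegative). *)

Definition cexpi (t : R) : C := Complex (cos t) (sin t).

Definition omega (n : nat) (theta : 'M[R]_n) (i j : 'I_n) : C :=
  cexpi (2 * pi * theta i j).

Variable V : lmodType C.
Variable ip : V -> V -> C.

Definition is_inner_product : Prop :=
  [/\ forall (a : C) (x y z : V), ip (a *: x + y) z = a * ip x z + ip y z,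
      forall x y : V, ip y x = Num.conj (ip x y),
      forall x : V, 0 <= ip x x
    & forall x : V, ip x x = 0 -> x = 0].

Definition hnorm (x : V) : C := sqrtC (ip x x).

Definition is_complete : Prop :=
  forall u : nat -> V,
    (forall e : C, 0 < e -> exists N : nat, forall m p : nat,
        (N <= m)%N -> (N <= p)%N -> hnorm (u m - u p) < e) ->
    exists l : V, forall e : C, 0 < e -> exists N : nat, forall m : nat,
        (N <= m)%N -> hnorm (u m - l) < e.

Definition is_hilbert : Prop := is_inner_product /\ is_complete.

Definition is_bounded_op (T : V -> V) : Prop :=
  (forall (a : C) (x y : V), T (a *: x + y) = a *: T x + T y) /\
  exists M : C, forall x : V, hnorm (T x) <= M * hnorm x.

Definition is_adjoint (T S : V -> V) : Prop :=
  forall x y : V, ip (T x) y = ip x (S y).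

End Hilbert.

From HB Require Import structures.
From mathcomp Require Import all_boot all_order all_algebra.
From mathcomp Require Import reals trigo.
From mathcomp Require Import complex.
Import Order.TTheory GRing.Theory Num.Theory.
Local Open Scope ring_scope.

(* Relations (R2)-(R5) make every U_ik a partial isometry with U_il^* U_ik = 0
   for k <> l, and (R1) with i = j then gives U_ik U_il = 0. Summing (R1) over
   the rows expresses U_ik through the range projections P_jl = U_jl U_jl^*
   of another column l, so U_ik and its adjoint commute with every P_jl, l <> k.
   For i <> j, the vector y = U_ik U_jk x is killed by P_il and P_jl, so for
   each of the n - 1 columns l <> k it is covered by the n - 2 projections P_ml,
   m <> i, j; since P_ml P_ml' = 0 and P_ml commutes with P_m'l' for l <> l',
   a pigeonhole argument forces y = 0. Thus U_ik U_jk = 0 and, taking adjoints,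
   U_jk^* U_ik^* = 0, which kills all cross terms when both U_ik U_ik^* and
   U_ik^* U_ik are expanded with (R2) and (R3). *)

Set Implicit Arguments.
Unset Strict Implicit.
Unset Printing Implicit Defensive.

Lemma omega_diag (R : realType) (n : nat) (theta : 'M[R]_n) (i : 'I_n) :
  theta^T = - theta -> omega theta i i = 1.
Proof.
move=> /(congr1 (fun M : 'M[R]_n => M i i)); rewrite !mxE => /esym/eqP.
by rewrite eqNr => /eqP theta_ii0; rewrite /omega theta_ii0 mulr0 /cexpi cos0 sin0.
Qed.

Lemma pigeonhole_cover_eq0 (I : eqType) (V : zmodType)
    (P : I -> I -> {additive V -> V}) :
  (forall m m' l l' y, l != l' -> P m l (P m' l' y) = P m' l' (P m l y)) ->
  (forall m l l' y, l != l' -> P m l (P m l' y) = 0) ->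
  forall (L M : seq I) (y : V), uniq L -> (size M < size L)%N ->
  (forall l, l \in L -> y = \sum_(m <- M) P m l y) -> y = 0.
Proof.
move=> P_comm P_orth; elim=> [|l0 L IHL] // M y /andP[l0L uniqL] ltML yP.
rewrite (yP l0 (mem_head _ _)) big1_seq // => m /andP[_ mM].
apply: (IHL (rem m M)) => // [|l lL].
  by rewrite size_rem //; case: M mM ltML {yP} => // ? ?; rewrite ltnS.
have l0l : l0 != l by apply: contraNneq l0L => ->.
rewrite {1}(yP l (mem_behead (s := l0 :: L) lL)) raddf_sum (big_rem m mM) /=.
rewrite P_orth // add0r.
by apply: eq_bigr => m' _; apply: P_comm.
Qed.

Section InnerProduct.
Variables (R : realType) (V : lmodType R[i]) (ip : V -> V -> R[i]).
Hypothesis ipP : is_inner_product ip.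

Lemma ipBl x y z : ip (x - y) z = ip x z - ip y z.
Proof.
case: ipP => ip_linear _ _ _.
exact: (zmod_morphism_linear (s := *%R) (fun a u v => ip_linear a u v z)).
Qed.

Lemma ip0l z : ip 0 z = 0.
Proof. by rewrite -(subrr 0) ipBl subrr. Qed.

Lemma ipBr x y z : ip z (x - y) = ip z x - ip z y.
Proof. by case: ipP => _ ip_conj _ _; rewrite !(ip_conj _ z) ipBl rmorphB. Qed.

Lemma ip0r z : ip z 0 = 0.
Proof. by rewrite -(subrr 0) ipBr subrr. Qed.

Lemma ip_inj_r y1 y2 : (forall x, ip x y1 = ip x y2) -> y1 = y2.
Proof.
case: ipP => _ _ _ ip_definite eq_ip; apply/eqP; rewrite -subr_eq0.
by apply/eqP/ip_definite; rewrite ipBr eq_ip subrr.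
Qed.

Lemma adjoint_sym T S : is_adjoint ip T S -> is_adjoint ip S T.
Proof. by case: ipP => _ ip_conj _ _ adjTS x y; rewrite ip_conj -adjTS -ip_conj. Qed.

Lemma adjoint_comp A As B Bs : is_adjoint ip A As -> is_adjoint ip B Bs ->
  is_adjoint ip (A \o B) (Bs \o As).
Proof. by move=> adjA adjB x y; rewrite /= adjA adjB. Qed.

Lemma adjoint_eq T1 T2 S1 S2 : T1 =1 T2 ->
  is_adjoint ip T1 S1 -> is_adjoint ip T2 S2 -> S1 =1 S2.
Proof. by move=> eqT adj1 adj2 y; apply: ip_inj_r => x; rewrite -adj1 -adj2 eqT. Qed.

Lemma adjoint_eq0 T S : (forall x, T x = 0) -> is_adjoint ip T S ->
  forall y, S y = 0.
Proof. by move=> T0 adjTS y; apply: ip_inj_r => x; rewrite -adjTS T0 ip0l ip0r. Qed.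

End InnerProduct.

Section TwistedRelations.
Variables (R : realType) (V : lmodType R[i]) (ip : V -> V -> R[i]).
Hypothesis ipP : is_inner_product ip.
Variables (n : nat) (w : 'I_n -> 'I_n -> R[i]).
Variables (U Us : 'I_n -> 'I_n -> {linear V -> V}).
Hypothesis w_diag : forall i, w i i = 1.
Hypothesis adjU : forall i k, is_adjoint ip (U i k) (Us i k).
Hypothesis U_twisted_comm : forall i j k l x,
  U i k (U j l x) + w j i *: U j k (U i l x)
  = w k l *: U i l (U j k x) + (w j i * w k l) *: U j l (U i k x).
Hypothesis sum_U_Us : forall k l x,
  \sum_(i < n) U i k (Us i l x) = if k == l then x else 0.
Hypothesis sum_Us_U : forall k l x,
  \sum_(i < n) Us i l (U i k x) = if k == l then x else 0.
Hypothesis U_Us_neq_row : forall i j k x, i != j -> U j k (Us i k x) = 0.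
Hypothesis Us_U_neq_row : forall i j k x, i != j -> Us i k (U j k x) = 0.

Lemma U_Us_U i k x : U i k (Us i k (U i k x)) = U i k x.
Proof.
transitivity (U i k (\sum_(j < n) Us j k (U j k x))); last by rewrite sum_Us_U eqxx.
by rewrite linear_sum (bigD1 i) //= big1 ?addr0 // => j ji; apply: U_Us_neq_row.
Qed.

Lemma Us_U_Us i k x : Us i k (U i k (Us i k x)) = Us i k x.
Proof.
transitivity (Us i k (\sum_(j < n) U j k (Us j k x))); last by rewrite sum_U_Us eqxx.
rewrite linear_sum (bigD1 i) //= big1 ?addr0 // => j ji.
by apply: Us_U_neq_row; rewrite eq_sym.
Qed.

Lemma Us_U_neq_col i k l x : k != l -> Us i l (U i k x) = 0.
Proof.
move=> kl; rewrite -Us_U_Us.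
suff -> : U i l (Us i l (U i k x)) = 0 by rewrite linear0.
transitivity (U i l (\sum_(j < n) Us j l (U j k x))).
  by rewrite linear_sum (bigD1 i) //= big1 ?addr0 // => j ji; apply: U_Us_neq_row.
by rewrite sum_Us_U (negbTE kl) linear0.
Qed.

Lemma U_U_neq_col i k l x : k != l -> U i k (U i l x) = 0.
Proof.
move=> kl; rewrite -U_Us_U.
suff -> : Us i k (U i k (U i l x)) = 0 by rewrite linear0.
have := congr1 (Us i k) (U_twisted_comm i i k l x).
rewrite w_diag scale1r mul1r !linearD !linearZ /= (@Us_U_neq_col i l k) 1?eq_sym //.
rewrite scaler0 addr0 => /eqP; rewrite -mulr2n -scaler_nat scaler_eq0 pnatr_eq0.
by move/eqP.
Qed.

Lemma U_expansion i k l x : k != l ->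
  U i k x = \sum_(j < n) (w j i * w k l) *: U j l (U i k (Us j l x)).
Proof.
move=> kl.
have sum_first : \sum_(j < n) U i k (U j l (Us j l x)) = U i k x.
  by rewrite -linear_sum sum_U_Us eqxx.
have sum_second : \sum_(j < n) w j i *: U j k (U i l (Us j l x)) = 0.
  apply: big1 => j _; have [-> | ji] := eqVneq j i.
    by rewrite U_U_neq_col ?scaler0.
  by rewrite U_Us_neq_row ?linear0 ?scaler0.
have sum_third : \sum_(j < n) w k l *: U i l (U j k (Us j l x)) = 0.
  by rewrite -scaler_sumr -linear_sum sum_U_Us (negbTE kl) linear0 scaler0.
transitivity (\sum_(j < n)
    (U i k (U j l (Us j l x)) + w j i *: U j k (U i l (Us j l x)))).
  by rewrite big_split /= sum_first sum_second addr0.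
rewrite (eq_bigr _ (fun j _ => U_twisted_comm i j k l (Us j l x))).
by rewrite big_split /= sum_third add0r.
Qed.

Lemma proj_U_comm i k m l x : k != l ->
  U m l (Us m l (U i k x)) = U i k (U m l (Us m l x)).
Proof.
move=> kl; rewrite [RHS](U_expansion i _ kl) (U_expansion i x kl) !linear_sum.
rewrite (bigD1 m) //= [RHS](bigD1 m) //= !big1 ?addr0 => [|j jm|j jm].
- by rewrite !linearZ /= U_Us_U Us_U_Us.
- by rewrite Us_U_neq_row ?linear0 ?scaler0.
- by rewrite !linearZ /= Us_U_neq_row 1?eq_sym ?linear0 ?scaler0.
Qed.

Lemma proj_Us_comm i k m l y : k != l ->
  Us i k (U m l (Us m l y)) = U m l (Us m l (Us i k y)).
Proof.
move=> kl; have proj_selfadj := adjoint_comp (adjU m l) (adjoint_sym ipP (adjU m l)).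
apply: (adjoint_eq ipP _ (adjoint_comp proj_selfadj (adjU i k))
                         (adjoint_comp (adjU i k) proj_selfadj)) => x /=.
exact: proj_U_comm.
Qed.

Lemma proj_comm m m' l l' y : l != l' ->
  U m l (Us m l (U m' l' (Us m' l' y))) = U m' l' (Us m' l' (U m l (Us m l y))).
Proof. by move=> ll'; rewrite proj_Us_comm // proj_U_comm. Qed.

Lemma proj_orth m l l' y : l != l' -> U m l (Us m l (U m l' (Us m l' y))) = 0.
Proof. by move=> ll'; rewrite Us_U_neq_col 1?eq_sym // linear0. Qed.

Lemma U_U_neq_row i j k x : i != j -> U i k (U j k x) = 0.
Proof.
move=> ij; set y := U i k (U j k x); set e := index_enum 'I_n.
have jIe : j \in rem i e.
  by rewrite mem_rem_uniq ?index_enum_uniq // inE eq_sym ij mem_index_enum.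
apply: (@pigeonhole_cover_eq0 _ _ (fun m l => U m l \o Us m l)
          _ _ (rem k e) (rem j (rem i e))) => [m m' l l' z ll'|m l l' z ll'| | |l].
- exact: proj_comm.
- exact: proj_orth.
- by rewrite rem_uniq ?index_enum_uniq.
- rewrite (size_rem jIe) !size_rem ?mem_index_enum //.
  by rewrite -(size_rem (mem_index_enum i)) ltn_predL; case: (rem i e) jIe.
rewrite mem_rem_uniq ?index_enum_uniq // inE => /andP[lk _].
have kl : k != l by rewrite eq_sym.
have P_il_y : U i l (Us i l y) = 0 by rewrite /y Us_U_neq_col ?linear0.
have P_jl_y : U j l (Us j l y) = 0.
  by rewrite /y proj_U_comm // Us_U_neq_col // !linear0.
have := sum_U_Us l l y; rewrite eqxx => sum_proj_y.
rewrite -{1}sum_proj_y (big_rem i) ?mem_index_enum //=.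
by rewrite (big_rem j) //= P_il_y P_jl_y !add0r.
Qed.

Lemma Us_Us_neq_row i j k y : i != j -> Us j k (Us i k y) = 0.
Proof.
move=> ij; apply: (adjoint_eq0 ipP _ (adjoint_comp (adjU i k) (adjU j k))) => x.
exact: U_U_neq_row.
Qed.

Lemma U_Us_normal i k x : U i k (Us i k x) = Us i k (U i k x).
Proof.
have := sum_Us_U k k x; have := sum_U_Us k k (Us i k (U i k x)).
rewrite !eqxx => expand_rhs expand_x; rewrite -{1}expand_x -expand_rhs !linear_sum.
rewrite (bigD1 i) //= [RHS](bigD1 i) //= !big1 // => j ji.
  by rewrite Us_Us_neq_row ?linear0 // eq_sym.
by rewrite Us_Us_neq_row ?linear0.
Qed.

End TwistedRelations.

Theorem proposition3p14 (R : realType) (V : lmodType R[i]) (ip : V -> V -> R[i])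
  (n : nat) (theta : 'M[R]_n) (U Us : 'I_n -> 'I_n -> V -> V) :
  is_hilbert ip ->
  (2 <= n)%N ->
  theta^T = - theta ->
  (forall i k, is_bounded_op ip (U i k)) ->
  (forall i k, is_bounded_op ip (Us i k)) ->
  (forall i k, is_adjoint ip (U i k) (Us i k)) ->
  (* (R1) *)
  (forall (i j k l : 'I_n) (x : V),
      U i k (U j l x) + omega theta j i *: U j k (U i l x)
      = omega theta k l *: U i l (U j k x)
        + (omega theta j i * omega theta k l) *: U j l (U i k x)) ->
  (* (R2) *)
  (forall (k l : 'I_n) (x : V),
      \sum_(i < n) U i k (Us i l x) = if k == l then x else 0) ->
  (* (R3) *)
  (forall (k l : 'I_n) (x : V),
      \sum_(i < n) Us i l (U i k x) = if k == l then x else 0) ->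
  (* (R4) *)
  (forall (i j k : 'I_n) (x : V), i != j -> U j k (Us i k x) = 0) ->
  (* (R5) *)
  (forall (i j k : 'I_n) (x : V), i != j -> Us i k (U j k x) = 0) ->
  forall (i k : 'I_n) (x : V), U i k (Us i k x) = Us i k (U i k x).
Proof.
move=> [ipP _] _ theta_skew boundedU boundedUs adjU R1 R2 R3 R4 R5.
pose UL i k : {linear V -> V} :=
  HB.pack (U i k) (GRing.isLinear.Build _ _ _ _ (U i k) (boundedU i k).1).
pose UsL i k : {linear V -> V} :=
  HB.pack (Us i k) (GRing.isLinear.Build _ _ _ _ (Us i k) (boundedUs i k).1).
exact: (@U_Us_normal R V ip ipP n (omega theta) UL UsL
          (fun i => omega_diag i theta_skew) adjU R1 R2 R3 R4 R5).
Qed.
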